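(* Let $G=(V,E)$ be a directed labeled graph with vertex-labeling function $l_V:V\to\mathcal{X}$ and edge-labeling function $l_E:E\to\mathcal{Z}$, where $\mathcal{X},\mathcal{Z}$ are countable sets. Let $c_l^{(t)}$ be the Weisfeiler--Lehman colorings for directed labeled graphs and $f^{(t)}$ the GNN node representations defined in the context below. Then for all $t\ge 0$, for all choices of initial representations $f^{(0)}$ consistent with $l_V$, of edge embeddings $f_E$ consistent with $l_E$, and of weight matrices $W_1^{(t)},W_2^{(t)},W_3^{(t)},W_4^{(t)}$, we have $$c_l^{(t)}(v)=c_l^{(t)}(u)\ \Longrightarrow\ f^{(t)}(v)=f^{(t)}(u)\qquad\text{for all } u,v\in V.$$
   Context: A directed edge $(u,v)\in E$ starts at $u$ and ends at $v$. Neighborhoods: $\mathcal{N}(v)=\{u\in V: (v,u)\in E \text{ or } (u,v)\in E\}$, $\mathcal{N}^I(v)=\{u:(u,v)\in E\}$, $\mathcal{N}^O(v)=\{u:(v,u)\in E\}$. For an edge label $e\in\mathcal{Z}$, let $n^I_v(e)=|\{u\in\mathcal{N}^I(v): l_E(u,v)=e\}|$ and $n^O_v(e)=|\{u\in\mathcal{N}^O(v): l_E(v,u)=e\}|$. Weisfeiler--Lehman coloring: $c_l^{(0)}(v)=l_V(v)$, and for $t\ge1$ $$c_l^{(t)}(v)=g\Big(c_l^{(t-1)}(v),\ \{\{c_l^{(t-1)}(u):u\in\mathcal{N}(v)\}\},\ \{(n^I_v(e),e): \exists (u,v)\in E \text{ with } l_E(u,v)=e\},\ \{(n^O_v(e),e):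 \exists (v,u)\in E \text{ with } l_E(v,u)=e\}\Big),$$ where $g$ is an injective hashing function and $\{\{\cdot\}\}$ denotes a multiset. GNN: $f^{(t)}(v)\in\mathbb{R}^{1\times d^{(t)}}$, with $$f^{(t)}(v)=\sigma\Big(f^{(t-1)}(v)W_1^{(t)}+\sum_{u\in\mathcal{N}(v)}f^{(t-1)}(u)W_2^{(t)}+\sum_{(u,v)\in E}f_E(u,v,l_E(u,v))W_3^{(t)}+\sum_{(v,u)\in E}f_E(v,u,l_E(v,u))W_4^{(t)}\Big),$$ where $\sigma$ is an elementwise activation function, $W_1^{(t)},W_2^{(t)}\in\mathbb{R}^{d^{(t-1)}\times d^{(t)}}$, $W_3^{(t)},W_4^{(t)}\in\mathbb{R}^{d_E\times d^{(t)}}$, and $f_E(u,v,l_E(u,v))\in\mathbb{R}^{1\times d_E}$ is an embedding of the edge $(u,v)$. $f^{(0)}$ is consistent with $l_V$ if $f^{(0)}(v)=f^{(0)}(u)\iff l_V(v)=l_V(u)$ for all $u,v\in V$. The edge embeddings $f_E$ are consistent with $l_E$ if for all vertices $v,v'$: $\sum_{(u,v)\in E}f_E(u,v,l_E(u,v))=\sum_{(u,v')\in E}f_E(u,v',l_E(u,v'))$ if and only if $\{(n^I_v(e),e):\exists(u,v)\in E, l_E(u,v)=e\}=\{(n^I_{v'}(e),e):\exists(u,v')\in E, l_E(u,v')=e\}$, and the analogous equivalence holds for sums over outgoing edges $(v,u)\in E$ and the sets built from $n^O$. *)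

From HB Require Import structures.
From mathcomp Require Import all_boot all_order all_algebra.
From mathcomp Require Import finmap multiset.
From mathcomp Require Import reals.

Set Implicit Arguments. Unset Strict Implicit. Unset Printing Implicit Defensive.
Import Order.TTheory GRing.Theory Num.Theory.
Local Open Scope ring_scope.
Local Open Scope fset_scope.

(* The edge labeling l_E : E -> Z is modelled by a
   function lE : V -> V -> Z whose values on non-edges are irrelevant. *)
Section Graph.
Variables (V : finType) (E : rel V).

Definition nbr (v : V) : pred V := fun u => E v u || E u v.
Definition in_nbr (v : V) : pred V := fun u => E u v.
Definition out_nbr (v : V) : pred V := fun u => E v u.

Variables (Z : countType) (lE : V -> V -> Z).

Definition nI (v : V) (e : Z) : nat := #|[pred u | E u v & lE u v == e]|.
Definition nO (v : V) (e : Z) : nat := #|[pred u | E v u & lE v u == e]|.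

Definition in_lab_set (v : V) : {fset nat * Z} :=
  [fset x in [seq (nI v (lE u v), lE u v) | u <- enum (in_nbr v)]].
Definition out_lab_set (v : V) : {fset nat * Z} :=
  [fset x in [seq (nO v (lE v u), lE v u) | u <- enum (out_nbr v)]].

(* Weisfeiler--Lehman coloring. Colors live in a choiceType C; the initial
   color is l_V(v) (embedded injectively into C by iota), and g is the
   injective hash. *)
Variables (X : countType) (lV : V -> X) (C : choiceType) (iota : X -> C)
  (g : C -> {mset C}%mset -> {fset nat * Z} -> {fset nat * Z} -> C).

Fixpoint wl (t : nat) : V -> C :=
  match t with
  | 0 => fun v => iota (lV v)
  | t'.+1 => fun v =>
      g (wl t' v) (seq_mset [seq wl t' u | u <- enum (nbr v)])
        (in_lab_set v) (out_lab_set v)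
  end.

Variables (R : realType) (sigma : R -> R) (d : nat -> nat) (dE : nat)
  (f0 : V -> 'rV[R]_(d 0))
  (fE : V -> V -> Z -> 'rV[R]_dE)
  (W1 W2 : forall t, 'M[R]_(d t, d t.+1))
  (W3 W4 : forall t, 'M[R]_(dE, d t.+1)).

Fixpoint gnn (t : nat) : V -> 'rV[R]_(d t) :=
  match t as t0 return V -> 'rV[R]_(d t0) with
  | 0 => f0
  | t'.+1 => fun v =>
      map_mx sigma
        (gnn t' v *m W1 t'
         + \sum_(u | nbr v u) (gnn t' u *m W2 t')
         + \sum_(u | E u v) (fE u v (lE u v) *m W3 t')
         + \sum_(u | E v u) (fE v u (lE v u) *m W4 t'))
  end.

End Graph.

Definition consistent_init (V : finType) (X : Type) (R : Type) (n : nat)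
  (lV : V -> X) (f0 : V -> 'rV[R]_n) : Prop :=
  forall u v : V, f0 v = f0 u <-> lV v = lV u.

Definition consistent_edge (V : finType) (E : rel V) (Z : countType)
  (lE : V -> V -> Z) (R : ringType) (dE : nat) (fE : V -> V -> Z -> 'rV[R]_dE)
  : Prop :=
  (forall v v' : V,
     \sum_(u | E u v) fE u v (lE u v) = \sum_(u | E u v') fE u v' (lE u v')
     <-> in_lab_set E lE v = in_lab_set E lE v')
  /\
  (forall v v' : V,
     \sum_(u | E v u) fE v u (lE v u) = \sum_(u | E v' u) fE v' u (lE v' u)
     <-> out_lab_set E lE v = out_lab_set E lE v').

From HB Require Import structures.
From mathcomp Require Import all_boot all_order all_algebra.
From mathcomp Require Import finmap multiset.
From mathcomp Require Import reals.

(* One WL round reveals the previous colour of v, the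
   multiset of previous colours of its neighbours and its in/out edge-label
   sets. By induction the previous GNN features are a function of the previous
   colours, so equal colour multisets give equal neighbour sums, while
   consistency of f_E turns equal label sets into equal edge sums. Hence every
   argument of the next GNN layer agrees. *)

Set Implicit Arguments. Unset Strict Implicit. Unset Printing Implicit Defensive.
Local Open Scope ring_scope.

Section BigFactor.
Variables (T : finType) (C : eqType) (M : Type) (idx : M).
Variable op : Monoid.com_law idx.
Variables (w : T -> C) (F : T -> M).
Hypothesis F_factors : forall x y, w x = w y -> F x = F y.

Lemma perm_big_factor (s1 s2 : seq T) :
  perm_eq [seq w x | x <- s1] [seq w x | x <- s2] ->
  \big[op/idx]_(x <- s1) F x = \big[op/idx]_(x <- s2) F x.
Proof.
pose h c := if [pick x | w x == c] is Some x then F x else idx.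
have Fh x : F x = h (w x).
  by rewrite /h; case: pickP => [y /eqP/F_factors //|/(_ x)]; rewrite eqxx.
move=> perm_w; under eq_bigr do rewrite Fh.
by under [RHS]eq_bigr do rewrite Fh; rewrite -!(big_map w xpredT h) (perm_big _ perm_w).
Qed.

End BigFactor.

Section WLRefinesGNN.
Variables (V : finType) (E : rel V) (X Z : countType).
Variables (lV : V -> X) (lE : V -> V -> Z) (C : choiceType) (iota : X -> C).
Variable g : C -> {mset C}%mset -> {fset nat * Z} -> {fset nat * Z} -> C.
Hypothesis iota_inj : injective iota.
Hypothesis g_inj : forall a m s o a' m' s' o', g a m s o = g a' m' s' o' ->
  [/\ a = a', m = m', s = s' & o = o'].
Variables (R : realType) (sigma : R -> R) (d : nat -> nat) (dE : nat).
Variables (f0 : V -> 'rV[R]_(d 0)) (fE : V -> V -> Z -> 'rV[R]_dE).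
Variables (W1 W2 : forall t, 'M[R]_(d t, d t.+1)).
Variables (W3 W4 : forall t, 'M[R]_(dE, d t.+1)).
Hypothesis f0_consistent : consistent_init lV f0.
Hypothesis fE_consistent : consistent_edge E lE fE.

Local Notation wl := (wl E lE lV iota g).
Local Notation gnn := (gnn E lE sigma f0 fE W1 W2 W3 W4).

Lemma wlS_inj t v u : wl t.+1 v = wl t.+1 u ->
  [/\ wl t v = wl t u,
      perm_eq [seq wl t x | x <- enum (nbr E v)] [seq wl t x | x <- enum (nbr E u)],
      in_lab_set E lE v = in_lab_set E lE u
    & out_lab_set E lE v = out_lab_set E lE u].
Proof. by case/g_inj=> eq_self /eq_seq_msetP perm_nbr eq_in eq_out. Qed.

Lemma gnnS_congr t v u :
  gnn t v = gnn t u ->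
  \sum_(x | nbr E v x) gnn t x = \sum_(x | nbr E u x) gnn t x ->
  in_lab_set E lE v = in_lab_set E lE u ->
  out_lab_set E lE v = out_lab_set E lE u ->
  gnn t.+1 v = gnn t.+1 u.
Proof.
case: fE_consistent => [in_sum out_sum] /= eq_self eq_nbr eq_in eq_out.
rewrite -!mulmx_suml eq_self eq_nbr.
by rewrite (proj2 (in_sum v u) eq_in) (proj2 (out_sum v u) eq_out).
Qed.

Lemma wl_refines_gnn t v u : wl t v = wl t u -> gnn t v = gnn t u.
Proof.
elim: t v u => [|t IH] v u /=; first by move/iota_inj/f0_consistent.
case/wlS_inj => eq_self perm_nbr eq_in eq_out.
apply: gnnS_congr => //; first exact: IH.
by rewrite -!big_enum (perm_big_factor _ IH perm_nbr).
Qed.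

End WLRefinesGNN.

Theorem theorem1
  (V : finType) (E : rel V) (X Z : countType) (lV : V -> X) (lE : V -> V -> Z)
  (C : choiceType) (iota : X -> C)
  (g : C -> {mset C}%mset -> {fset nat * Z} -> {fset nat * Z} -> C)
  (iota_inj : injective iota)
  (g_inj : forall a m s o a' m' s' o', g a m s o = g a' m' s' o' ->
             [/\ a = a', m = m', s = s' & o = o'])
  (R : realType) (sigma : R -> R) (d : nat -> nat) (dE : nat)
  (f0 : V -> 'rV[R]_(d 0)) (fE : V -> V -> Z -> 'rV[R]_dE)
  (W1 W2 : forall t, 'M[R]_(d t, d t.+1))
  (W3 W4 : forall t, 'M[R]_(dE, d t.+1)) :
  consistent_init lV f0 ->
  consistent_edge E lE fE ->
  forall (t : nat) (u v : V),
    wl E lE lV iota g t v = wl E lE lV iota g t u ->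
    gnn E lE sigma f0 fE W1 W2 W3 W4 t v = gnn E lE sigma f0 fE W1 W2 W3 W4 t u.
Proof. by move=> f0_consistent fE_consistent t u v; apply: wl_refines_gnn. Qed.
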